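(* Let $L,M,N$ be positive integers. For $n=1,\dots,N$ let $\bm{s}_n\in\mathbb{C}^L$, $\overline{\bm{h}}_n\in\mathbb{C}^M$, $\bm{R}_n\in\mathbb{C}^{M\times M}$, and set $g_n=\frac{1}{M}\operatorname{tr}(\bm{R}_n)$. Let $\bm{a}^\circ\in\{0,1\}^N$. Define $$\mathcal{N}_{\mathrm{I}}=\Big\{\bm{x}\in\mathbb{R}^N:\ \sum_{n=1}^N x_n\bm{R}_n\otimes(\bm{s}_n\bm{s}_n^H)=\bm{0}\ \text{and}\ \sum_{n=1}^N x_n\overline{\bm{h}}_n\otimes\bm{s}_n=\bm{0}\Big\},$$ $$\mathcal{N}_{\mathrm{II}}=\Big\{\bm{x}\in\mathbb{R}^N:\ \sum_{n=1}^N x_n g_n\bm{I}_M\otimes(\bm{s}_n\bm{s}_n^H)=\bm{0}\ \text{and}\ \sum_{n=1}^N x_n\overline{\bm{h}}_n\otimes\bm{s}_n=\bm{0}\Big\},$$ $$\mathcal{C}=\{\bm{x}\in\mathbb{R}^N:\ x_n\ge 0\text{ if }a^\circ_n=0,\ x_n\le 0\text{ if }a^\circ_n=1\}.$$ If $\mathcal{N}_{\mathrm{II}}\cap\mathcal{C}=\{\bm{0}\}$, then $\mathcal{N}_{\mathrm{I}}\cap\mathcal{C}=\{\bm{0}\}$.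
   Context: $\otimes$ is the Kronecker product. In the paper, $\bm{R}_n$ is the channel correlation matrix of device $n$ (correlated case) and $g_n\bm{I}_M$ its uncorrelated counterpart; $\bm{a}^\circ$ is the true activity vector. *)

From HB Require Import structures.
From mathcomp Require Import all_boot all_order all_algebra.
From mathcomp Require Import complex mxtens.
Set Implicit Arguments. Unset Strict Implicit. Unset Printing Implicit Defensive.
Import Order.TTheory GRing.Theory Num.Theory.
Local Open Scope ring_scope.
Local Open Scope complex_scope.

Definition hermmx (R : rcfType) m n (A : 'M[R[i]]_(m, n)) : 'M[R[i]]_(n, m) :=
  (map_mx (@conjc R) A)^T.

Definition gfac (R : rcfType) (M : nat) (Rn : 'M[R[i]]_M) : R[i] :=
  \tr Rn / M%:R.

Definition NullI (R : rcfType) (L M N : nat)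
  (s : 'I_N -> 'cV[R[i]]_L) (hbar : 'I_N -> 'cV[R[i]]_M)
  (Rm : 'I_N -> 'M[R[i]]_M) (x : 'I_N -> R) : Prop :=
  \sum_(n < N) ((x n)%:C *: (Rm n *t (s n *m hermmx (s n)))) = 0 /\
  \sum_(n < N) ((x n)%:C *: (hbar n *t s n)) = 0.

Definition NullII (R : rcfType) (L M N : nat)
  (s : 'I_N -> 'cV[R[i]]_L) (hbar : 'I_N -> 'cV[R[i]]_M)
  (Rm : 'I_N -> 'M[R[i]]_M) (x : 'I_N -> R) : Prop :=
  \sum_(n < N) ((x n)%:C *: (((gfac (Rm n))%:M : 'M[R[i]]_M) *t (s n *m hermmx (s n)))) = 0 /\
  \sum_(n < N) ((x n)%:C *: (hbar n *t s n)) = 0.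

Definition ConeC (R : rcfType) (N : nat) (a : 'I_N -> bool) (x : 'I_N -> R) : Prop :=
  forall n : 'I_N, (~~ a n -> 0 <= x n) /\ (a n -> x n <= 0).

(** Taking the partial trace over the first Kronecker factor turns
    [\sum_n x_n R_n (x) P_n = 0] into [\sum_n x_n tr(R_n) P_n = 0]; tensoring
    back with [I_M / M] gives [\sum_n x_n g_n I_M (x) P_n = 0].  So [N_I] is
    contained in [N_II], whatever the matrices [P_n = s_n s_n^H], and the
    cone condition passes to the subset. *)

From HB Require Import structures.
From mathcomp Require Import all_boot all_order all_algebra.
From mathcomp Require Import complex mxtens.
Import Order.TTheory GRing.Theory Num.Theory.
Local Open Scope ring_scope.

Section TensmxLinear.
Variables (R : comPzRingType) (m n p q : nat).

Lemma tensmxZl (c : R) (A : 'M[R]_(m, n)) (B : 'M[R]_(p, q)) :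
  (c *: A) *t B = c *: (A *t B).
Proof. by apply/matrixP => i j; rewrite !mxE mulrA. Qed.

Fact tensmx_is_linear (A : 'M[R]_(m, n)) : linear (@tensmx R m n p q A).
Proof.
by move=> c B C; apply/matrixP => i j; rewrite !mxE mulrDr mulrCA.
Qed.

HB.instance Definition _ (A : 'M[R]_(m, n)) :=
  GRing.isLinear.Build R 'M[R]_(p, q) 'M[R]_(m * p, n * q) _
    (@tensmx R m n p q A) (tensmx_is_linear A).

End TensmxLinear.

Lemma scalar_tensmx (R : comPzRingType) (m p q : nat) (a : R)
    (B : 'M[R]_(p, q)) :
  (a%:M : 'M_m) *t B = 1%:M *t (a *: B).
Proof.
apply/matrixP => u v.
case: (mxtens_indexP u) => i k; case: (mxtens_indexP v) => j l.
by rewrite !tensmxE !mxE mulr_natl mulrnAl.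
Qed.

Section PartialTrace.
Variables (R : comPzRingType) (m p q : nat).

Definition ptrace (A : 'M[R]_(m * p, m * q)) : 'M[R]_(p, q) :=
  \matrix_(k, l) \sum_(i < m) A (mxtens_index (i, k)) (mxtens_index (i, l)).

Fact ptrace_is_linear : linear ptrace.
Proof.
move=> c A B; apply/matrixP => k l.
by rewrite !mxE mulr_sumr -big_split; apply: eq_bigr => i _; rewrite !mxE.
Qed.

HB.instance Definition _ :=
  GRing.isLinear.Build R 'M[R]_(m * p, m * q) 'M[R]_(p, q) _ ptrace
    ptrace_is_linear.

Lemma ptrace_tens (A : 'M[R]_m) (B : 'M[R]_(p, q)) :
  ptrace (A *t B) = \tr A *: B.
Proof.
apply/matrixP => k l; rewrite !mxE mulr_suml.
by apply: eq_bigr => i _; rewrite tensmxE.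
Qed.

End PartialTrace.

Lemma sum_tensmx_trace_eq0 (R : comPzRingType) (m p q N : nat)
    (c : 'I_N -> R) (A : 'I_N -> 'M[R]_m) (B : 'I_N -> 'M[R]_(p, q)) :
  \sum_(n < N) c n *: (A n *t B n) = 0 ->
  \sum_(n < N) c n *: (((\tr (A n))%:M : 'M_m) *t B n) = 0.
Proof.
move=> /(congr1 (@ptrace R m p q)); rewrite linear_sum linear0 => trace_eq0.
under eq_bigr do rewrite scalar_tensmx -linearZ.
rewrite -linear_sum /=.
under eq_bigr do rewrite -ptrace_tens -linearZ.
by rewrite trace_eq0 tensmx0.
Qed.

Lemma NullI_NullII (R : rcfType) (L M N : nat)
    (s : 'I_N -> 'cV[R[i]]_L) (hbar : 'I_N -> 'cV[R[i]]_M)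
    (Rm : 'I_N -> 'M[R[i]]_M) (x : 'I_N -> R) :
  NullI s hbar Rm x -> NullII s hbar Rm x.
Proof.
move=> [/sum_tensmx_trace_eq0 trace_eq0 hbar_eq0]; split=> //.
under eq_bigr do
  rewrite /gfac mulrC -scale_scalar_mx tensmxZl scalerA mulrC -scalerA.
by rewrite -scaler_sumr trace_eq0 scaler0.
Qed.

Theorem theorem3 (R : rcfType) (L M N : nat) (hL : (0 < L)%N) (hM : (0 < M)%N)
  (hN : (0 < N)%N)
  (s : 'I_N -> 'cV[R[i]]_L) (hbar : 'I_N -> 'cV[R[i]]_M)
  (Rm : 'I_N -> 'M[R[i]]_M) (a : 'I_N -> bool) :
  (forall x : 'I_N -> R, NullII s hbar Rm x /\ ConeC a x <-> x = (fun _ => 0)) ->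
  (forall x : 'I_N -> R, NullI s hbar Rm x /\ ConeC a x <-> x = (fun _ => 0)).
Proof.
move=> NullII_cone_trivial x; split.
  by move=> [/NullI_NullII x_NullII x_cone]; apply/NullII_cone_trivial.
move=> ->; split; last by move=> n; split.
by split; apply: big1 => n _; rewrite scale0r.
Qed.
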